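(* Let $C$ be any strongly intransitive finite two-player game (as defined in the context). Then no learning algorithm competing as player 1 in the open-source competition associated with $C$ is a universal winner; that is, for every algorithm $L'$ there exists an algorithm $L''$ that $L'$ does not defeat.
   Context: Games. A (finite, zero-sum, win/draw/loss, two-player) game is given by finite sets of strategies (“playing programs”) $p'_1,\dots,p'_{n'}$ for player 1 and $p''_1,\dots,p''_{n''}$ for player 2, together with a computable payoff function $C(p'_i,p''_j)\in\{+1,0,-1\}$, where $+1$ means $p'_i\succ p''_j$ (player 1 wins), $0$ means $p'_i\sim p''_j$ (draw) and $-1$ means $p'_i\prec p''_j$ (player 1 loses). The game is strongly intransitive if every strategy $p'_i$ of player 1 has at least one strategy $p''_j=S''(p'_i)$ of player 2 with $p'_i\prec p''_j$, and every strategy $p''_j$ of player 2 has at least one strategy $p'_{\tilde\imath}=S'(p''_j)$ of player 1 with $p'_{\tilde\imath}\succ p''_j$; $S',S''$ are fixed (computable, since the strategy sets are finite) best-response functions selecting such a winning reply. Open-source competition. Learning algorithms are Turing-machine programs (run on a universal Turing machine with unbounded resources). Both learning algorithms know $C$. Algorithm $L'$ (for player 1) receives the source code of the opposing algorithm $L''$ as input, and $L''$ (for player 2) receives the source code of $L'$; if they halt, $L'[L'']$ outputs a strategy $p'_i$ of player 1 and $L''[L']$ outputs a strategy $p''_j$ of player 2. An algorithm may fail to halt on a given input. $L'$ defeats $L''$ if either (i) both $L'[L'']$ and $L''[L']$ halt with outputs $p'_i$ and $p''_j$ and $p'_i\succ p''_j$, or (ii) $L'[L'']$ halts with an output and demonstrates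 (within a fixed, agreed axiomatic system) that $L''[L']$ does not halt. An algorithm $L'$ is a universal winner for the game $C$ if it defeats every opposing algorithm $L''$. *)

From mathcomp Require Import all_boot.
Set Implicit Arguments. Unset Strict Implicit. Unset Printing Implicit Defensive.

(* Model of computation: the weak call-by-value lambda calculus L          *)
(* (Forster & Smolka), a Turing-complete model standing in for Turing      *)
(* machines on a universal machine.               *)

Inductive term : Type :=
| var (n : nat)
| app (s t : term)
| lam (s : term).

(* substitution of index k by (closed) u *)
Fixpoint subst (s : term) (k : nat) (u : term) : term :=
  match s with
  | var n => if Nat.eqb n k then u else var n
  | app s1 s2 => app (subst s1 k u) (subst s2 k u)
  | lam s1 => lam (subst s1 (S k) u)
  end.

Inductive eval : term -> term -> Prop :=
| evalLam s : eval (lam s) (lam s)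
| evalApp s t s' t' u :
    eval s (lam s') -> eval t (lam t') -> eval (subst s' 0 (lam t')) u ->
    eval (app s t) u.

Definition halts (s : term) : Prop := exists v, eval s v.

Fixpoint bound (k : nat) (s : term) : bool :=
  match s with
  | var n => Nat.ltb n k
  | app s1 s2 => bound k s1 && bound k s2
  | lam s1 => bound (S k) s1
  end.

Definition closed_prog (s : term) : Prop := bound 0 s = true.

Fixpoint enc_nat (n : nat) : term :=
  match n with
  | 0 => lam (lam (var 1))
  | S m => lam (lam (app (var 0) (enc_nat m)))
  end.

(* Scott encoding of terms: the "source code" of a program *)
Fixpoint enc (s : term) : term :=
  match s with
  | var n => lam (lam (lam (app (var 2) (enc_nat n))))
  | app s1 s2 => lam (lam (lam (app (app (var 1) (enc s1)) (enc s2))))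
  | lam s1 => lam (lam (lam (app (var 0) (enc s1))))
  end.

(* running algorithm L on the source code of x:  L[x] *)
Definition run (L x : term) : term := app L (enc x).

Fixpoint dec_nat (v : term) : option nat :=
  match v with
  | lam (lam (var 1)) => Some 0
  | lam (lam (app (var 0) t)) => option_map S (dec_nat t)
  | _ => None
  end.

(* Output convention: every halting output denotes a strategy among n:
   the numeral k denotes strategy (k mod n); any other value denotes
   strategy 0. *)
Definition strategy_of (n : nat) (v : term) : nat :=
  match dec_nat v with
  | Some k => k %% n
  | None => 0
  end.

Definition outputs (n : nat) (L x : term) (i : 'I_n) : Prop :=
  exists v, eval (run L x) v /\ strategy_of n v = i.

Inductive outcome : Type := P1Wins | Draw | P1Loses.

Definition game (n1 n2 : nat) : Type := 'I_n1 -> 'I_n2 -> outcome.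

Definition strongly_intransitive (n1 n2 : nat) (C : game n1 n2) : Prop :=
  (forall i : 'I_n1, exists j : 'I_n2, C i j = P1Loses) /\
  (forall j : 'I_n2, exists i : 'I_n1, C i j = P1Wins).

(* The fixed axiomatic system, abstracted as a relation                    *)
(*   ProofOf c q p : c is a demonstration (in the system) that the         *)
(*                    program q run on the source code of p does not halt.   *)

Definition sound_system (ProofOf : term -> term -> term -> Prop) : Prop :=
  forall c q p, ProofOf c q p -> ~ halts (run q p).

Definition defeats (n1 n2 : nat) (C : game n1 n2)
  (ProofOf : term -> term -> term -> Prop) (L1 L2 : term) : Prop :=
  (exists (i : 'I_n1) (j : 'I_n2),
      outputs L1 L2 i /\ outputs L2 L1 j /\ C i j = P1Wins)
  \/
  (exists v, eval (run L1 L2) v /\ ProofOf v L2 L1).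

Definition universal_winner (n1 n2 : nat) (C : game n1 n2)
  (ProofOf : term -> term -> term -> Prop) (L1 : term) : Prop :=
  forall L2, closed_prog L2 -> defeats C ProofOf L1 L2.

From mathcomp Require Import all_boot.
From Stdlib Require PeanoNat.
Set Implicit Arguments. Unset Strict Implicit.

(* Kleene's recursion theorem, in the form of a quine.  Fix a table that
   lists, for every strategy i of player 1, a strategy of player 2 beating i.
   The program [diag = R ⌜R⌝], run on the code of a program L, rebuilds its
   own code ⌜R ⌜R⌝⌝, runs L on it with a self-interpreter, and answers with
   the table entry for the strategy L plays.  Against [diag], an algorithm L1
   either diverges, and then so does [diag], so that L1 neither wins a play
   nor outputs a demonstration; or it plays some i, and then [diag] halts and
   plays the reply beating i, so that L1 loses the play and a sound system
   cannot demonstrate that [diag] diverges. *)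

Definition is_lam (t : term) : bool := if t is lam _ then true else false.

(* Multi-step call-by-value reduction.  Unlike [eval] it may stop at any
   intermediate term, which is what the specifications of programs need. *)
Inductive red : term -> term -> Prop :=
| RedRefl s : red s s
| RedBeta s t u : is_lam t -> red (subst s 0 t) u -> red (app (lam s) t) u
| RedAppL s s' t u : red s s' -> red (app s' t) u -> red (app s t) u
| RedAppR s t t' u : red t t' -> red (app s t') u -> red (app s t) u.

Lemma red_trans s t u : red s t -> red t u -> red s u.
Proof.
elim=> {s t} [//|s t v t_lam _ IH|s s' t v s_s' _ _ IH|s t t' v t_t' _ _ IH] t_u.
- exact: RedBeta (IH t_u).
- exact: RedAppL s_s' (IH t_u).
- exact: RedAppR t_t' (IH t_u).
Qed.

Lemma red_beta s t : is_lam t -> red (app (lam s) t) (subst s 0 t).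
Proof. by move=> t_lam; apply: RedBeta (RedRefl _). Qed.

Lemma red_appl s s' t : red s s' -> red (app s t) (app s' t).
Proof. by move=> s_s'; apply: RedAppL s_s' (RedRefl _). Qed.

Lemma red_appr s t t' : red t t' -> red (app s t) (app s t').
Proof. by move=> t_t'; apply: RedAppR t_t' (RedRefl _). Qed.

Lemma eval_appP s t v :
  eval (app s t) v <->
  exists s' t', [/\ eval s (lam s'), eval t (lam t') & eval (subst s' 0 (lam t')) v].
Proof.
split=> [ev_v|[s' [t' [ev_s ev_t ev_v]]]]; last exact: evalApp ev_s ev_t ev_v.
by inversion ev_v; exists s', t'.
Qed.

Lemma red_eval s t v : red s t -> eval t v -> eval s v.
Proof.
move=> s_t; elim: s_t v => {s t} [//|s t u t_lam _ IH|s s' t u _ IHs _ IH|s t t' u _ IHt _ IH] v.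
- by case: t t_lam IH => // t _ IH /IH; apply: evalApp; apply: evalLam.
- by move=> /IH/eval_appP[s0 [t0 [/IHs ev_s ev_t ev_v]]]; apply: evalApp ev_t ev_v.
- by move=> /IH/eval_appP[s0 [t0 [ev_s /IHt ev_t ev_v]]]; apply: evalApp ev_t ev_v.
Qed.

Lemma red_value_eval s v : red s v -> is_lam v -> eval s v.
Proof. by move=> s_v; case: v s_v => // v s_v _; apply: red_eval s_v (evalLam _). Qed.

Lemma eval_det s v w : eval s v -> eval s w -> v = w.
Proof.
move=> ev_v; elim: ev_v w => {s v} [s|s t s' t' u _ IHs _ IHt _ IH] w ev_w; first by inversion ev_w.
case/eval_appP: ev_w => s0 [t0 [/IHs[<-] /IHt[<-]]]; exact: IH.
Qed.

Lemma ltbE n k : Nat.ltb n k = (n < k).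
Proof. by apply/PeanoNat.Nat.ltb_spec0/ltP. Qed.

Lemma bound_le s n m : bound n s -> n <= m -> bound m s.
Proof.
elim: s n m => [k|s IHs t IHt|s IH] n m /=.
- by rewrite !ltbE => /leq_trans; apply.
- by case/andP=> bs bt le_nm; rewrite (IHs _ _ bs le_nm) (IHt _ _ bt le_nm).
- by move=> bs le_nm; apply: IH bs _.
Qed.

Lemma subst_bound s n k u : bound n s -> n <= k -> subst s k u = s.
Proof.
elim: s n k => [j|s IHs t IHt|s IH] n k /=.
- rewrite ltbE => lt_jn le_nk; case: PeanoNat.Nat.eqb_spec => // eq_jk.
  by move: lt_jn; rewrite eq_jk ltnNge le_nk.
- by case/andP=> bs bt le_nk; rewrite (IHs _ _ bs le_nk) (IHt _ _ bt le_nk).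
- by move=> bs le_nk; rewrite (IH _ _ bs).
Qed.

Lemma subst_closed s k u : closed_prog s -> subst s k u = s.
Proof. by move=> s_closed; apply: subst_bound s_closed _. Qed.

Lemma closed_enc_nat n : closed_prog (enc_nat n).
Proof. by rewrite /closed_prog; elim: n => //= n /bound_le; apply. Qed.

Lemma closed_enc s : closed_prog (enc s).
Proof.
rewrite /closed_prog; elim: s => [n|s IHs t IHt|s IH] /=.
- exact: bound_le (closed_enc_nat n) _.
- by rewrite (bound_le IHs) ?(bound_le IHt).
- exact: bound_le IH _.
Qed.

Lemma is_lam_enc s : is_lam (enc s). Proof. by case: s. Qed.

Lemma is_lam_enc_nat n : is_lam (enc_nat n). Proof. by case: n. Qed.

Lemma dec_enc_nat k : dec_nat (enc_nat k) = Some k.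
Proof. by elim: k => //= k ->. Qed.

Lemma strategy_of_enc_nat n k : strategy_of n (enc_nat k) = k %% n.
Proof. by rewrite /strategy_of dec_enc_nat. Qed.

(** * Programs *)

(* [Fix F a] reduces to [D D a] with [D = λx. F (λy. x x y)], and then to
   [F (λy. D D y) a]; as [F] is closed, [λy. D D y] is [Fix F] itself. *)
Definition Dfix (F : term) := lam (app F (lam (app (app (var 1) (var 1)) (var 0)))).
Definition Fix (F : term) := lam (app (app (Dfix F) (Dfix F)) (var 0)).
Arguments Dfix : simpl never.
Arguments Fix : simpl never.

Lemma closed_Dfix F : closed_prog F -> closed_prog (Dfix F).
Proof. by move=> F_closed; rewrite /closed_prog /= (bound_le F_closed). Qed.

Lemma closed_Fix F : closed_prog F -> closed_prog (Fix F).
Proof.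
by move=> F_closed; rewrite /closed_prog /Fix /= (bound_le F_closed).
Qed.

Lemma red_fix F b a : F = lam b -> closed_prog F -> is_lam a ->
  red (app (Fix F) a) (app (subst b 0 (Fix F)) a).
Proof.
move=> eq_F F_closed a_lam; have D_closed := closed_Dfix F_closed.
have DD : red (app (Dfix F) (Dfix F)) (app F (Fix F)).
  rewrite {1}/Dfix; apply: red_trans (red_beta _ _) _ => //.
  by rewrite [subst _ 0 _]/= subst_closed //; apply: RedRefl.
apply: RedBeta a_lam _.
rewrite [subst _ 0 a]/= subst_closed //.
apply: RedAppL DD _; rewrite {1}eq_F; exact/red_appl/red_beta.
Qed.

(* Programs are written with named variables and translated to de Bruijn
   form when they are defined; [NTerm t] embeds a closed term [t], and an
   unbound name would become [var 0] (every program is checked closed). *)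
Inductive named : Type :=
| NVar (x : nat)
| NApp (s t : named)
| NLam (x : nat) (s : named)
| NTerm (t : term).

Fixpoint db_index (x : nat) (ctx : seq nat) : nat :=
  if ctx is y :: ctx' then if Nat.eqb x y then 0 else (db_index x ctx').+1 else 0.

Fixpoint to_db (ctx : seq nat) (s : named) : term :=
  match s with
  | NVar x => var (db_index x ctx)
  | NApp s t => app (to_db ctx s) (to_db ctx t)
  | NLam x s => lam (to_db (x :: ctx) s)
  | NTerm t => t
  end.

Coercion NVar : nat >-> named.
Coercion NTerm : term >-> named.
Notation "s $ t" := (NApp s t) (at level 40, left associativity).
Notation "'λ' x , s" := (NLam x s) (at level 60, right associativity).
Declare Reduction compile := cbv [to_db db_index Nat.eqb].

(* Numerals are λz s. z and λz s. s n; the code of a term is λa b c. a n,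
   λa b c. b s t or λa b c. c s (see [enc_nat] and [enc]). *)
Module ProgramNotation.
Notation self := 0 (only parsing).
Notation n := 1 (only parsing).
Notation n' := 2 (only parsing).
Notation m := 3 (only parsing).
Notation m' := 4 (only parsing).
Notation k := 5 (only parsing).
Notation k' := 6 (only parsing).
Notation c := 7 (only parsing).
Notation s := 8 (only parsing).
Notation s1 := 9 (only parsing).
Notation s2 := 10 (only parsing).
Notation t := 11 (only parsing).
Notation w := 12 (only parsing).
Notation x := 13 (only parsing).
Notation y := 14 (only parsing).
Notation z := 15 (only parsing).
Notation a := 16 (only parsing).
Notation b := 17 (only parsing).
Notation b1 := 18 (only parsing).
Notation b2 := 19 (only parsing).
Notation p := 20 (only parsing).
Notation q := 21 (only parsing).
Notation v := 22 (only parsing).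
Notation TT := (λ a, λ b, a) (only parsing).
Notation FF := (λ a, λ b, b) (only parsing).
Notation ID := (λ x, x) (only parsing).
Notation ZERO := (NTerm (enc_nat 0)) (only parsing).
Notation ONE := (NTerm (enc_nat 1)) (only parsing).
Notation SUCC := (λ n, λ a, λ b, b $ n) (only parsing).
Notation MKVAR := (λ x, λ a, λ b, λ c, a $ x) (only parsing).
Notation MKAPP := (λ x, λ y, λ a, λ b, λ c, b $ x $ y) (only parsing).
Notation MKLAM := (λ x, λ a, λ b, λ c, c $ x) (only parsing).
Notation LAM3 e := (MKLAM $ (MKLAM $ (MKLAM $ e))) (only parsing).
End ProgramNotation.

Section Programs.
Import ProgramNotation.

Definition EqbF : term := Eval compile in to_db [::]
  (λ self, λ n, n $ (λ m, m $ TT $ (λ m', FF))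
                  $ (λ n', λ m, m $ FF $ (λ m', self $ n' $ m'))).

Definition SubstF : term := Eval compile in to_db [::]
  (λ self, λ s, s $ (λ x, λ k, λ w, Fix EqbF $ x $ k $ w $ (MKVAR $ x))
                  $ (λ s1, λ s2, λ k, λ w, MKAPP $ (self $ s1 $ k $ w) $ (self $ s2 $ k $ w))
                  $ (λ s1, λ k, λ w, MKLAM $ (self $ s1 $ (SUCC $ k) $ w))).

Definition EvalF : term := Eval compile in to_db [::]
  (λ self, λ s, s $ ID
                  $ (λ s1, λ s2, self $ s1 $ ID $ ID
                                   $ (λ b, λ t, self $ (Fix SubstF $ b $ ZERO $ t))
                                   $ (self $ s2))
                  $ (λ b, MKLAM $ b)).

Definition QuoteNatF : term := Eval compile in to_db [::]
  (λ self, λ n, n $ enc (enc_nat 0)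
                  $ (λ n', MKLAM $ (MKLAM $ (MKAPP $ enc (var 0) $ (self $ n'))))).

Definition QuoteF : term := Eval compile in to_db [::]
  (λ self, λ s, s $ (λ x, LAM3 (MKAPP $ enc (var 2) $ (Fix QuoteNatF $ x)))
                  $ (λ s1, λ s2, LAM3 (MKAPP $ (MKAPP $ enc (var 1) $ (self $ s1)) $ (self $ s2)))
                  $ (λ s1, LAM3 (MKAPP $ enc (var 0) $ (self $ s1)))).

Definition DecodeF : term := Eval compile in to_db [::]
  (λ self, λ c,
     c $ (λ x, ZERO) $ (λ s1, λ s2, ZERO)
       $ (λ b1, b1 $ (λ x, ZERO) $ (λ s1, λ s2, ZERO)
           $ (λ b2, b2 $ (λ x, x $ ZERO $ (λ y, y $ ONE $ (λ z, ZERO)))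
               $ (λ p, λ q, p $ (λ x, x $ (self $ q $ ZERO $ (λ y, SUCC $ (SUCC $ y)))
                                         $ (λ y, ZERO))
                              $ (λ s1, λ s2, ZERO) $ (λ s1, ZERO))
               $ (λ s1, ZERO)))).

Definition CycleF (modulus : nat) : term := Eval compile in to_db [::]
  (λ self, λ k, λ c,
     k $ c $ (λ k', self $ k' $ (Fix EqbF $ (SUCC $ c) $ enc_nat modulus $ ZERO $ (SUCC $ c)))).

Definition Strategy (modulus : nat) : term := Eval compile in to_db [::]
  (λ v, Fix DecodeF $ v $ ZERO $ (λ k, Fix (CycleF modulus) $ k $ ZERO)).

Fixpoint Table (l : seq nat) : term :=
  if l is o :: l' then lam (app (app (var 0) (enc_nat o)) (Table l')) else lam (enc_nat 0).

Definition Responder (tab : seq nat) : term := Eval compile in to_db [::]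
  (λ self, λ x, Table tab $ (Strategy (size tab) $ (Fix EvalF
     $ (MKAPP $ x $ (Fix QuoteF $ (MKAPP $ self $ (Fix QuoteF $ self))))))).

End Programs.

Notation EQB := (Fix EqbF).
Notation SUBST := (Fix SubstF).
Notation EVAL := (Fix EvalF).
Notation QUOTE_NAT := (Fix QuoteNatF).
Notation QUOTE := (Fix QuoteF).
Notation DECODE := (Fix DecodeF).
Notation CYCLE modulus := (Fix (CycleF modulus)).
Arguments Table : simpl never.
Arguments Strategy : simpl never.
Arguments Responder : simpl never.

Lemma is_lam_Table l : is_lam (Table l). Proof. by case: l. Qed.

Lemma closed_Table l : closed_prog (Table l).
Proof.
rewrite /closed_prog; elim: l => [|o l IH] //=.
by rewrite (bound_le (closed_enc_nat o)) ?(bound_le IH).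
Qed.

Lemma closed_CycleF modulus : closed_prog (CycleF modulus).
Proof. by rewrite /closed_prog /= (bound_le (closed_enc_nat modulus)). Qed.

Lemma closed_Strategy modulus : closed_prog (Strategy modulus).
Proof.
by rewrite /closed_prog /= !(bound_le (closed_enc_nat modulus)).
Qed.

Lemma closed_Responder tab : closed_prog (Responder tab).
Proof.
by rewrite /closed_prog /= (bound_le (closed_Table tab)) ?(bound_le (closed_enc_nat _)).
Qed.

Create HintDb programs.
#[export] Hint Resolve is_lam_enc is_lam_enc_nat is_lam_Table : programs.
#[export] Hint Resolve closed_enc closed_enc_nat closed_Fix closed_CycleF : programs.
#[export] Hint Resolve closed_Table closed_Strategy : programs.

(* Symbolic execution: [red_steps] performs call-by-value beta steps but
   never unfolds a [Fix]; a recursive call is either unfolded once with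
   [red_unfold_fix] or replaced by its specification with [red_by]. *)
Ltac side_condition := solve [ reflexivity | eauto with programs ].

Ltac simpl_red := cbn; repeat match goal with
  | |- context [subst ?s ?k ?u] => rewrite (@subst_closed s k u); last side_condition
  end.

Ltac beta_redex := lazymatch goal with
  | |- red (app (lam _) _) _ =>
      first [ apply red_beta; side_condition | apply red_appr; beta_redex ]
  | |- red (app _ _) _ => first [ apply red_appl; beta_redex | apply red_appr; beta_redex ]
  end.

Ltac fix_redex := lazymatch goal with
  | |- red (app (Fix _) _) _ =>
      first [ eapply red_fix; [reflexivity | side_condition | side_condition]
            | apply red_appr; fix_redex ]
  | |- red (app _ _) _ => first [ apply red_appl; fix_redex | apply red_appr; fix_redex ]
  end.

Ltac red_steps := simpl_red; repeat (eapply red_trans; [beta_redex | simpl_red]).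
Ltac red_unfold_fix := eapply red_trans; [fix_redex | red_steps].

Ltac red_in_context H := first
  [ exact H | apply red_appl; red_in_context H | apply red_appr; red_in_context H ].

Ltac red_by H := eapply red_trans; [red_in_context H | red_steps].

Ltac red_done := red_steps; apply RedRefl.

(** * Specifications of the programs *)

Definition enc_bool (b : bool) : term := if b then lam (lam (var 1)) else lam (lam (var 0)).

Lemma red_EQB n m : red (app (app EQB (enc_nat n)) (enc_nat m)) (enc_bool (Nat.eqb n m)).
Proof.
elim: n m => [|n IH] [|m]; red_unfold_fix; try red_done.
by red_by (IH m); red_done.
Qed.

Lemma red_SUBST s k w :
  red (app (app (app SUBST (enc s)) (enc_nat k)) (enc w)) (enc (subst s k w)).
Proof.
elim: s k => [n|s IHs t IHt|s IH] k; red_unfold_fix.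
- by red_by (red_EQB n k); case: (Nat.eqb n k); red_done.
- by red_by (IHs k); red_by (IHt k); red_done.
- by red_by (IH k.+1); red_done.
Qed.

Lemma red_EVAL s v : eval s v -> red (app EVAL (enc s)) (enc v).
Proof.
elim=> {s v} [s|s t s' t' u _ IHs _ IHt _ IH]; red_unfold_fix; first by red_done.
by red_by IHs; red_by IHt; red_by (red_SUBST s' 0 (lam t')); red_by IH; red_done.
Qed.

Lemma red_QUOTE_NAT n : red (app QUOTE_NAT (enc_nat n)) (enc (enc_nat n)).
Proof. by elim: n => [|n IH]; red_unfold_fix; [|red_by IH]; red_done. Qed.

Lemma red_QUOTE s : red (app QUOTE (enc s)) (enc (enc s)).
Proof.
elim: s => [n|s IHs t IHt|s IH]; red_unfold_fix.
- by red_by (red_QUOTE_NAT n); red_done.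
- by red_by IHs; red_by IHt; red_done.
- by red_by IH; red_done.
Qed.

Fixpoint term_size (s : term) : nat :=
  match s with
  | var _ => 1
  | app s t => (term_size s + term_size t).+1
  | lam s => (term_size s).+1
  end.

Lemma red_DECODE v : red (app DECODE (enc v)) (enc_nat (oapp S 0 (dec_nat v))).
Proof.
have [N] := ubnP (term_size v); elim: N v => // N IH v /ltnSE.
case: v => [n|s t|[n|s t|[n|[x|s1 s2|s1] q|s1]]] /= size_v; red_unfold_fix; try red_done.
- by case: n => [|[|n]]; red_done.
- have size_q : term_size q < N by apply: leq_ltn_trans size_v; rewrite add1n !leqW.
  red_by (IH q size_q).
  by case: (dec_nat q) => [k|]; case: x => [|x]; red_done.
Qed.

(* The case [n = 0], where [%% 0] is the identity, serves games in which
   player 1 has no strategy. *)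
Lemma red_CYCLE (n k c : nat) : (n == 0) || (c < n) ->
  red (app (app (CYCLE n) (enc_nat k)) (enc_nat c)) (enc_nat ((c + k) %% n)).
Proof.
elim: k c => [|k IH] c c_small; red_unfold_fix.
  by rewrite addn0; case/orP: c_small => [/eqP->|/modn_small->]; rewrite ?modn0; apply: RedRefl.
have := red_EQB c.+1 n; case: PeanoNat.Nat.eqb_spec => [eq_n|neq_n] red_eqb; red_by red_eqb.
- subst n; red_by (IH 0 isT); rewrite -addSnnS modnDl; apply: RedRefl.
- have c1_small : (n == 0) || (c.+1 < n).
    case/orP: c_small => [-> //|lt_cn]; apply/orP; right.
    by rewrite ltn_neqAle lt_cn andbT; apply/eqP.
  by red_by (IH c.+1 c1_small); rewrite addSnnS; apply: RedRefl.
Qed.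

Lemma red_Strategy n v : red (app (Strategy n) (enc v)) (enc_nat (strategy_of n v)).
Proof.
have zero_small : (n == 0) || (0 < n) by rewrite lt0n orbN.
rewrite /strategy_of {1}/Strategy; red_steps; red_by (red_DECODE v).
by case: (dec_nat v) => [k|]; red_steps; [red_by (red_CYCLE k zero_small)|]; red_done.
Qed.

Lemma red_Table l i : red (app (Table l) (enc_nat i)) (enc_nat (nth 0 l i)).
Proof.
elim: l i => [|o l IH] i; rewrite {1}/Table -/Table; first by rewrite nth_nil; red_done.
by case: i => [|i]; red_steps; [|red_by (IH i)]; apply: RedRefl.
Qed.

(** * The diagonal program *)

Definition diag (tab : seq nat) : term := run (Responder tab) (Responder tab).

Lemma closed_run L x : closed_prog L -> closed_prog (run L x).
Proof. by move=> L_closed; apply/andP; split; last exact: closed_enc. Qed.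

Lemma closed_diag tab : closed_prog (diag tab).
Proof. exact/closed_run/closed_Responder. Qed.

Lemma red_diag tab L v : eval (run L (diag tab)) v ->
  red (run (diag tab) L) (enc_nat (nth 0 tab (strategy_of (size tab) v))).
Proof.
move=> ev_v; rewrite /diag /run {1}/Responder; red_steps.
red_by (red_QUOTE (Responder tab)); red_by (red_QUOTE (diag tab)).
red_by (red_EVAL ev_v); red_by (red_Strategy (size tab) v).
red_by (red_Table tab (strategy_of (size tab) v)).
exact: RedRefl.
Qed.

Definition response_table n1 n2 (br : 'I_n1 -> 'I_n2) : seq nat :=
  [seq val (br i) | i <- enum 'I_n1].

Lemma size_response_table n1 n2 (br : 'I_n1 -> 'I_n2) : size (response_table br) = n1.
Proof. by rewrite size_map size_enum_ord. Qed.

Lemma diag_halts tab L : halts (run L (diag tab)) -> halts (run (diag tab) L).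
Proof.
by case=> v /red_diag red_v; eexists; apply: red_value_eval red_v (is_lam_enc_nat _).
Qed.

Lemma diag_outputs n1 n2 (br : 'I_n1 -> 'I_n2) L i j :
  outputs L (diag (response_table br)) i -> outputs (diag (response_table br)) L j ->
  j = br i.
Proof.
case=> v [ev_v v_i] [w [ev_w w_j]]; apply: ord_inj.
have := red_value_eval (red_diag ev_v) (is_lam_enc_nat _).
rewrite size_response_table v_i (nth_map i) ?size_enum_ord // nth_ord_enum.
move=> /(eval_det ev_w) eq_w.
by rewrite -w_j eq_w strategy_of_enc_nat modn_small //; apply: ltn_ord.
Qed.

Theorem theorem1 (n1 n2 : nat) (C : game n1 n2)
  (ProofOf : term -> term -> term -> Prop) :
  strongly_intransitive C ->
  sound_system ProofOf ->
  forall L1 : term, closed_prog L1 -> ~ universal_winner C ProofOf L1.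
Proof.
move=> [beaten _] sound L1 _ winner.
have [br br_beats] := fin_all_exists beaten.
have [[i [j [out1 [out2 win]]]] | [v [ev_v proof]]] := winner _ (closed_diag (response_table br)).
  by move: win; rewrite (diag_outputs out1 out2) br_beats.
by apply: sound proof _; apply: diag_halts; exists v.
Qed.
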